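(* Let ${\mathbf{X}}\in\mathbb{R}_+^{m\times n}$ and let ${\mathbf{A}}\in\mathbb{R}^{k\times m}$ satisfy ${\mathbf{A}}{\mathbf{A}}^T={\mathbf{I}}_k$. Let ${\mathbf{U}}_0\in\mathbb{R}_+^{m\times r}$, ${\mathbf{V}}_0\in\mathbb{R}_+^{n\times r}$ be a minimizer of $\|{\mathbf{X}}-{\mathbf{U}}{\mathbf{V}}^T\|_F^2$ over ${\mathbf{U}}\in\mathbb{R}_+^{m\times r},{\mathbf{V}}\in\mathbb{R}_+^{n\times r}$, and set ${\mathbf{X}}_0={\mathbf{U}}_0{\mathbf{V}}_0^T$. Let $\lambda>0$ and let $(\tilde{\mathbf{U}},\tilde{\mathbf{V}})$ be any minimizer, over ${\mathbf{U}}\in\mathbb{R}_+^{m\times r},{\mathbf{V}}\in\mathbb{R}_+^{n\times r}$, of $$\|{\mathbf{A}}({\mathbf{X}}-{\mathbf{U}}{\mathbf{V}}^T)\|_F^2+\lambda\|P_{\mathbf{A}}^\perp{\mathbf{U}}{\mathbf{V}}^T\|_F^2,$$ where $P_{\mathbf{A}}^\perp={\mathbf{I}}_m-{\mathbf{A}}^T{\mathbf{A}}$. Then $\tilde{\mathbf{X}}:=\tilde{\mathbf{U}}\tilde{\mathbf{V}}^T$ satisfies $$\frac{\|{\mathbf{X}}-\tilde{\mathbf{X}}\|_F^2}{\|{\mathbf{X}}\|_F^2}\le c_\lambda\left[\frac{\|{\mathbf{X}}-{\mathbf{X}}_0\|_F^2}{\|{\mathbf{X}}\|_F^2}+\frac{\|P_{\mathbf{A}}^\perp{\mathbf{X}}\|_F^2}{\|{\mathbf{X}}\|_F^2}\right],\qquad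 c_\lambda=\max(2/\lambda,\,6,\,2\lambda+2).$$
   Context: $\mathbb{R}_+^{a\times b}$ denotes the set of $a\times b$ matrices with all entries nonnegative; ${\mathbf{X}}\neq 0$ is implicit in the ratios. $\|\cdot\|_F$ is the Frobenius norm. *)

From mathcomp Require Import all_boot all_order all_algebra.
Set Implicit Arguments. Unset Strict Implicit. Unset Printing Implicit Defensive.
Import Order.TTheory GRing.Theory Num.Theory.
Local Open Scope ring_scope.

Definition frob2 {R : numDomainType} {p q : nat} (M : 'M[R]_(p, q)) : R :=
  \sum_(i < p) \sum_(j < q) M i j ^+ 2.

Definition nonneg_mx {R : numDomainType} {p q : nat} (M : 'M[R]_(p, q)) : Prop :=
  forall i j, 0 <= M i j.

Definition projPerp {R : numDomainType} {k m : nat} (A : 'M[R]_(k, m)) : 'M[R]_m :=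
  1%:M - A^T *m A.

Definition penObj {R : numDomainType} {k m n r : nat} (A : 'M[R]_(k, m))
  (X : 'M[R]_(m, n)) (lam : R) (U : 'M[R]_(m, r)) (V : 'M[R]_(n, r)) : R :=
  frob2 (A *m (X - U *m V^T)) + lam * frob2 (projPerp A *m (U *m V^T)).

From mathcomp Require Import all_boot all_order all_algebra.
From mathcomp Require Import lra.
Set Implicit Arguments. Unset Strict Implicit. Unset Printing Implicit Defensive.
Import Order.TTheory GRing.Theory Num.Theory.
Local Open Scope ring_scope.

(* Write P for P_A^perp. Since A A^T = I, the rows of A span the complement of
   the range of P, so ||M||^2 = ||A M||^2 + ||P M||^2 for every M. Comparing the
   penalized objective at the optimum with its value at (U0, V0) -- only the
   feasibility of that pair is used, not its optimality -- gives
   ||A(X - Xt)||^2 + lam ||P Xt||^2 <= ||A(X - X0)||^2 + lam ||P X0||^2, and the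
   two P-terms are traded for ||P X||^2 and ||P(X - X0)||^2 by
   ||M - N||^2 <= 2||M||^2 + 2||N||^2. What remains is an inequality between
   nonnegative reals, proved separately for lam >= 2 and lam < 2. *)

Section FrobeniusNorm.
Variable R : realFieldType.

Lemma frob2_tr p q (M : 'M[R]_(p, q)) : frob2 M = \tr (M^T *m M).
Proof.
rewrite /frob2 /mxtrace exchange_big; apply: eq_bigr => j _.
by rewrite mxE; apply: eq_bigr => i _; rewrite !mxE expr2.
Qed.

Lemma frob2_ge0 p q (M : 'M[R]_(p, q)) : 0 <= frob2 M.
Proof. by apply: sumr_ge0 => i _; apply: sumr_ge0 => j _; apply: sqr_ge0. Qed.

Lemma frob2B_le p q (M N : 'M[R]_(p, q)) :
  frob2 (M - N) <= 2 * frob2 M + 2 * frob2 N.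
Proof.
rewrite /frob2 !mulr_sumr -big_split /=; apply: ler_sum => i _.
rewrite !mulr_sumr -big_split /=; apply: ler_sum => j _.
by rewrite !mxE; have := sqr_ge0 (M i j + N i j); nra.
Qed.

Lemma frob2_mulmx_proj p q (Q : 'M[R]_p) (M : 'M[R]_(p, q)) :
  Q^T = Q -> Q *m Q = Q -> frob2 (Q *m M) = \tr (M^T *m (Q *m M)).
Proof. by move=> QT QQ; rewrite frob2_tr trmx_mul QT -mulmxA (mulmxA Q) QQ. Qed.

Section CoisometryProjection.
Variables (k p : nat) (A : 'M[R]_(k, p)).
Hypothesis AAT : A *m A^T = 1%:M.

Lemma projPerp_tr : (projPerp A)^T = projPerp A.
Proof. by rewrite /projPerp linearB /= trmx1 trmx_mul trmxK. Qed.

Lemma projPerp_idem : projPerp A *m projPerp A = projPerp A.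
Proof.
have ATA_idem : A^T *m A *m (A^T *m A) = A^T *m A.
  by rewrite mulmxA -(mulmxA _ A) AAT mulmx1.
by rewrite /projPerp mulmxBl !mulmxBr !mul1mx mulmx1 ATA_idem subrr subr0.
Qed.

Lemma frob2_split q (M : 'M[R]_(p, q)) :
  frob2 M = frob2 (A *m M) + frob2 (projPerp A *m M).
Proof.
rewrite (frob2_mulmx_proj M projPerp_tr projPerp_idem) frob2_tr.
have -> : frob2 (A *m M) = \tr (M^T *m (A^T *m A *m M)).
  by rewrite frob2_tr trmx_mul !mulmxA.
by rewrite /projPerp mulmxBl mul1mx mulmxBr linearB /= addrC subrK.
Qed.

End CoisometryProjection.

End FrobeniusNorm.

Section PenaltyBound.
Variable R : realFieldType.

Definition c_lambda (lam : R) : R := Num.max (2 / lam) (Num.max 6 (2 * lam + 2)).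

(* [a], [e1]: residuals seen through A; [b], [g0]: penalties of Xt and X0;
   [e2], [q]: ||P(X - X0)||^2 and ||P X||^2; [h]: ||P(X - Xt)||^2. *)
Lemma penalized_residual_le (lam a b e1 e2 q g0 h : R) :
  0 < lam -> 0 <= a -> 0 <= b -> 0 <= e1 -> 0 <= e2 -> 0 <= q ->
  a + lam * b <= e1 + lam * g0 ->
  g0 <= 2 * q + 2 * e2 -> h <= 2 * q + 2 * b ->
  a + h <= c_lambda lam * (e1 + e2 + q).
Proof.
move=> lam0 a0 b0 e10 e20 q0 opt g0_le h_le.
have cl : 2 * lam + 2 <= c_lambda lam by rewrite le_max le_max lexx !orbT.
have c6 : 6 <= c_lambda lam by rewrite le_max le_max lexx orbT.
have g0_lam : lam * g0 <= lam * (2 * q + 2 * e2) by rewrite ler_wpM2l // ltW.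
have S0 : 0 <= e1 + e2 + q by lra.
case: (leP 2 lam) => [lam_ge2|lam_lt2].
  have b_lam : 2 * b <= lam * b by rewrite ler_wpM2r.
  have c_S : (2 * lam + 2) * (e1 + e2 + q) <= c_lambda lam * (e1 + e2 + q).
    by rewrite ler_wpM2r.
  nra.
set d := 2 / lam.
have d_lam : d * lam = 2 by rewrite /d mulrAC -mulrA divff ?mulr1 // gt_eqF.
have d_ge1 : 1 <= d by rewrite /d ler_pdivlMr // mul1r ltW.
have cd : d <= c_lambda lam by rewrite le_max lexx.
have opt_d : d * a + 2 * b <= d * e1 + 2 * g0.
  have := ler_wpM2l (le_trans ler01 d_ge1) opt.
  by rewrite !mulrDr !mulrA (mulrC d lam) -(mulrC d) d_lam.
have a_d : a <= d * a by rewrite ler_peMl.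
have e1_c : d * e1 <= c_lambda lam * e1 by rewrite ler_wpM2r.
have e2_c : 6 * e2 <= c_lambda lam * e2 by rewrite ler_wpM2r.
have q_c : 6 * q <= c_lambda lam * q by rewrite ler_wpM2r.
rewrite !mulrDr; lra.
Qed.

End PenaltyBound.

Theorem mainTheorem2 (R : realFieldType) (m n k r : nat)
  (X : 'M[R]_(m, n)) (A : 'M[R]_(k, m))
  (U0 : 'M[R]_(m, r)) (V0 : 'M[R]_(n, r))
  (Ut : 'M[R]_(m, r)) (Vt : 'M[R]_(n, r)) (lam : R) :
  nonneg_mx X -> X != 0 ->
  A *m A^T = 1%:M ->
  nonneg_mx U0 -> nonneg_mx V0 ->
  (forall (U : 'M[R]_(m, r)) (V : 'M[R]_(n, r)), nonneg_mx U -> nonneg_mx V ->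
     frob2 (X - U0 *m V0^T) <= frob2 (X - U *m V^T)) ->
  0 < lam ->
  nonneg_mx Ut -> nonneg_mx Vt ->
  (forall (U : 'M[R]_(m, r)) (V : 'M[R]_(n, r)), nonneg_mx U -> nonneg_mx V ->
     penObj A X lam Ut Vt <= penObj A X lam U V) ->
  frob2 (X - Ut *m Vt^T) / frob2 X <=
    Num.max (2 / lam) (Num.max 6 (2 * lam + 2)) *
    (frob2 (X - U0 *m V0^T) / frob2 X + frob2 (projPerp A *m X) / frob2 X).
Proof.
move=> _ _ AAT U0_ge0 V0_ge0 _ lam0 _ _ opt.
set X0 := U0 *m V0^T; set Xt := Ut *m Vt^T; set P := projPerp A.
rewrite -mulrDl mulrA ler_wpM2r ?invr_ge0 ?frob2_ge0 //.
rewrite (frob2_split AAT (X - Xt)) (frob2_split AAT (X - X0)) -/P.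
rewrite -[Num.max _ _]/(c_lambda lam).
apply: (penalized_residual_le (b := frob2 (P *m Xt)) (g0 := frob2 (P *m X0)));
  rewrite ?frob2_ge0 //.
- exact: opt U0 V0 U0_ge0 V0_ge0.
- have -> : P *m X0 = P *m X - P *m (X - X0).
    by rewrite [P *m (X - X0)]mulmxBr opprB addrC subrK.
  exact: frob2B_le.
- by rewrite mulmxBr; exact: frob2B_le.
Qed.
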